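(* Let $(\mathfrak{A},\mathfrak{A}_0)$ be a CQ*-algebra as in the context, and let $\mathfrak{A}_1$ be the completion of $\mathfrak{A}_0$ with respect to the inductive limit topology $\tau_{ind}$. Then $$\mathfrak{A}_0=\bigcup_{N\in\mathbb{N}}\mathfrak{A}_0(N)\subset\mathfrak{A}_1=\bigcup_{N\in\mathbb{N}}\overline{\mathfrak{A}_0(N)}[d_N]\subset\mathfrak{A},$$ where $\overline{\mathfrak{A}_0(N)}[d_N]$ is the completion of the metric space $(\mathfrak{A}_0(N),d_N)$ (realized as the $\|\cdot\|$-closure of $\mathfrak{A}_0(N)$ in $\mathfrak{A}$), and $\mathfrak{A}_1$, equipped with the norm $\|\cdot\|$, is a locally convex $*$-algebra: for $X,Y\in\mathfrak{A}_1$ and sequences $\{A_n\},\{B_n\}\subset\mathfrak{A}_0(N)$ (some $N$) with $\|A_n-X\|\to0$, $\|B_n-Y\|\to0$, the limit $XY:=\|\cdot\|\text{-}\lim_n A_nB_n$ exists in $\mathfrak{A}_1$ and is independent of the chosen sequences, this multiplication extends that of $\mathfrak{A}_0$, is separately $\|\cdot\|$-continuous, and $\|X^*\|=\|X\|$.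
   Context: Let $\mathfrak{A}_0$ be a unital C*-algebra with C*-norm $\|\cdot\|_0$, and $\|\cdot\|$ another norm on $\mathfrak{A}_0$ with $\|A\|\le\|A\|_0$, $\|AB\|\le\|A\|\,\|B\|_0$, $\|A^*\|=\|A\|$. $\mathfrak{A}$ is the Banach space completion of $(\mathfrak{A}_0,\|\cdot\|)$, with involution $X^*:=\lim A_n^*$ for $A_n\in\mathfrak{A}_0$, $\|A_n-X\|\to0$. For $N\in\mathbb{N}$ let $\mathfrak{A}_0(N)=\{A\in\mathfrak{A}_0:\|A\|_0\le N\}$ with metric $d_N(A,B)=\|A-B\|$. The inductive limit topology $\tau_{ind}$ on $\mathfrak{A}_0$ is defined by: $\tau_{ind}$-$\lim A_n=A$ iff $\{A_n\}\subset\mathfrak{A}_0(N)$ for some $N$ and $\|A_n-A\|\to0$. *)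

From HB Require Import structures.
From mathcomp Require Import all_boot all_order all_algebra.
From mathcomp Require Import complex.
From mathcomp Require Import all_classical all_reals all_analysis.
Import Order.TTheory GRing.Theory Num.Theory.
Local Open Scope ring_scope.
Local Open Scope classical_set_scope.
Local Open Scope complex_scope.

Set Implicit Arguments.
Unset Strict Implicit.
Unset Printing Implicit Defensive.

Record is_unital_Cstar_algebra (R : realType) (A0 : lalgType R[i])
    (st : A0 -> A0) (n0 : A0 -> R) : Prop := {
  cs_st_invol : forall a, st (st a) = a;
  cs_st_add : forall a b, st (a + b) = st a + st b;
  cs_st_scale : forall (c : R[i]) a, st (c *: a) = c^* *: st a;
  cs_st_mul : forall a b, st (a * b) = st b * st a;
  cs_n0_ge0 : forall a, 0 <= n0 a;
  cs_n0_eq0 : forall a, n0 a = 0 -> a = 0;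
  cs_n0_add : forall a b, n0 (a + b) <= n0 a + n0 b;
  cs_n0_scale : forall (c : R[i]) a, (n0 (c *: a))%:C = `|c| * (n0 a)%:C;
  cs_n0_mul : forall a b, n0 (a * b) <= n0 a * n0 b;
  cs_n0_Cstar : forall a, n0 (st a * a) = n0 a ^+ 2;
  cs_n0_complete : forall u : nat -> A0,
    (forall e : R, 0 < e -> exists M : nat,
        forall p q : nat, (M <= p)%N -> (M <= q)%N -> n0 (u p - u q) < e) ->
    exists a : A0, forall e : R, 0 < e -> exists M : nat,
        forall p : nat, (M <= p)%N -> n0 (u p - a) < e
}.

(** The second norm ||.|| on A0 is realized as a ||a|| := `|j a|, where
    j : A0 -> A is a linear injective map into a Banach space A with dense
    range: (A, j) is the Banach space completion of (A0, ||.||).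
    The hypotheses ||a|| <= ||a||_0, ||ab|| <= ||a|| ||b||_0, ||a^star|| = ||a||
    are imposed, and stA : A -> A is the extension of the involution to A,
    i.e. the (unique) continuous map with stA (j a) = j (st a)
    (X^star = lim A_n^star). *)
Record is_CQstar_completion (R : realType) (A0 : lalgType R[i])
    (st : A0 -> A0) (n0 : A0 -> R) (A : completeNormedModType R[i])
    (j : A0 -> A) (stA : A -> A) : Prop := {
  cq_j_add : forall a b, j (a + b) = j a + j b;
  cq_j_scale : forall (c : R[i]) a, j (c *: a) = c *: j a;
  cq_j_inj : injective j;
  cq_j_dense : closure (range j) = setT;
  cq_n_le_n0 : forall a, `|j a| <= (n0 a)%:C;
  cq_n_mul : forall a b, `|j (a * b)| <= `|j a| * (n0 b)%:C;
  cq_n_st : forall a, `|j (st a)| = `|j a|;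
  cq_stA_ext : forall a, stA (j a) = j (st a);
  cq_stA_cont : continuous stA
}.

Definition A0N (R : realType) (A0 : lalgType R[i]) (n0 : A0 -> R) (N : nat)
  : set A0 := [set a | n0 a <= N%:R].

Definition boundedN (R : realType) (A0 : lalgType R[i]) (n0 : A0 -> R)
  (N : nat) (u : nat -> A0) : Prop := forall k, A0N n0 N (u k).

(** The completion A1 of (A0, tau_ind), realized inside A: the set of
    ||.||-limits in A of tau_ind-Cauchy sequences, i.e. sequences lying in
    some A0(N) that are Cauchy for ||.||. *)
Definition tau_ind_completion (R : realType) (A0 : lalgType R[i])
  (n0 : A0 -> R) (A : completeNormedModType R[i]) (j : A0 -> A) : set A :=
  [set X | exists (N : nat) (u : nat -> A0), boundedN n0 N u /\
     cauchy ((j \o u) @ \oo) /\ (j \o u) @ \oo --> X].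

Definition is_product (R : realType) (A0 : lalgType R[i]) (n0 : A0 -> R)
  (A : completeNormedModType R[i]) (j : A0 -> A) (X Y Z : A) : Prop :=
  exists (N : nat) (u v : nat -> A0), boundedN n0 N u /\ boundedN n0 N v /\
    (j \o u) @ \oo --> X /\ (j \o v) @ \oo --> Y /\
    (fun k => j (u k * v k)) @ \oo --> Z.

Definition A1mul (R : realType) (A0 : lalgType R[i]) (n0 : A0 -> R)
  (A : completeNormedModType R[i]) (j : A0 -> A) (X Y : A) : A :=
  xget 0 [set Z | is_product n0 j X Y Z].

From HB Require Import structures.
From mathcomp Require Import all_boot all_order all_algebra.
From mathcomp Require Import complex.
From mathcomp Require Import all_classical all_reals all_analysis.
Import Order.TTheory GRing.Theory Num.Theory.
Import numFieldNormedType.Exports.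
Local Open Scope ring_scope.
Local Open Scope classical_set_scope.
Local Open Scope complex_scope.

(* From ||ab|| <= ||a|| ||b||_0 and, through the isometric
   involution, ||ab|| <= ||a||_0 ||b||, the product is Lipschitz for ||.|| on
   A0(N) x A0(N): ||ab - a'b'|| <= N (||a - a'|| + ||b - b'||).  Hence the
   products of two ||.||-convergent sequences of A0(N) form a Cauchy sequence,
   whose limit in the Banach space A depends only on the limits of the factors;
   every algebraic identity of A0 then passes to the limit along such
   sequences.  Fixing one factor, the same estimate makes multiplication by an
   element of A1 Lipschitz on A1, hence continuous. *)

Section FilterNormed.
Context {K : numFieldType} {V : normedModType K} {T : Type}.
Context {F : set_system T} {FF : Filter F}.

Lemma norm_le_cvg0 {g : T -> V} {h : T -> K} :
  h @ F --> 0 -> (\forall t \near F, `|g t| <= h t) -> g @ F --> 0.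
Proof.
move=> h0 gh; apply/cvgr0Pnorm_lt => e e0.
near=> t; have ght : `|g t| <= h t by near: t.
have ht_real : h t \is Num.real by exact: ger0_real (le_trans (normr_ge0 _) ght).
apply: le_lt_trans ght (le_lt_trans (real_ler_norm ht_real) _).
by near: t; exact: cvgr0_norm_lt.
Unshelve. all: end_near. Qed.

Lemma cvg_sum_dist0 (c : K) {f1 g1 f2 g2 : T -> V} {l1 l2 : V} :
  f1 @ F --> l1 -> g1 @ F --> l1 -> f2 @ F --> l2 -> g2 @ F --> l2 ->
  (fun t => c * (`|f1 t - g1 t| + `|f2 t - g2 t|)) @ F --> 0.
Proof.
move=> f1l g1l f2l g2l.
have -> : 0 = c * (`|l1 - l1| + `|l2 - l2|) by rewrite !subrr normr0 addr0 mulr0.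
by apply: cvgMl_tmp; apply: cvgD; apply: cvg_norm; exact: cvgB.
Qed.

End FilterNormed.

Section ProperFilterNormed.
Context {K : numFieldType} {V : normedModType K} {T : Type}.
Context {F : set_system T} {FF : ProperFilter F}.

Lemma cvg_ge0 {f : T -> K} {l : K} :
  f @ F --> l -> (forall t, 0 <= f t) -> 0 <= l.
Proof.
move=> fl f_ge0.
have normfE : (fun t => `|f t|) = f by apply: funext => t; rewrite ger0_norm.
have : f @ F --> `|l| by rewrite -normfE; exact: cvg_norm.
by move/(cvg_unique _ fl) => ->.
Qed.

Lemma ler_norm_cvg {f : T -> V} {b : T -> K} {l : V} {lb : K} :
  f @ F --> l -> b @ F --> lb -> (forall t, `|f t| <= b t) -> `|l| <= lb.
Proof.
move=> fl blb fb; rewrite -subr_ge0.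
by apply: (cvg_ge0 (cvgB blb (cvg_norm fl))) => t; rewrite subr_ge0.
Qed.

End ProperFilterNormed.

Lemma cauchy_le_sum {K : numFieldType} {V : normedModType K}
    {g : nat -> V} {h : nat -> K} :
  h @ \oo --> 0 -> (forall p q, `|g p - g q| <= h p + h q) -> cauchy (g @ \oo).
Proof.
move=> h0 gh; apply: cauchy_exP => e e0.
have [M _ hM] := cvgr0_norm_lt _ h0 (e / 2) (divr_gt0 e0 (ltr0Sn _ 1)).
exists (g M); apply: (@filterS _ _ _ [set n | (M <= n)%N]); last by exists M.
move=> n /= Mn; rewrite -ball_normE /ball_ /=.
have h_real k : h k \is Num.real.
  by have := gh k k; rewrite subrr normr0 -mulr2n pmulrn_lge0 // => /ger0_real.
apply: le_lt_trans (gh M n) _; rewrite [e]splitr; apply: ltrD.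
  exact: le_lt_trans (real_ler_norm (h_real _)) (hM _ (leqnn M)).
exact: le_lt_trans (real_ler_norm (h_real _)) (hM _ Mn).
Qed.

Lemma lipschitz_within_continuous {K : numFieldType} {V W : normedModType K}
    (f : V -> W) (S : set V) (k : K) :
  (forall y y', S y -> S y' -> `|f y' - f y| <= k * `|y' - y|) ->
  {within S, continuous f}.
Proof.
move=> f_lip; apply/subspace_continuousP => y Sy; apply/subr_cvg0.
have dist0 : (fun y' => k * `|y' - y|) @ within S (nbhs y) --> 0.
  have -> : 0 = k * `|y - y| by rewrite subrr normr0 mulr0.
  apply: cvgMl_tmp; apply: cvg_norm; apply: cvgB; last exact: cvg_cst.
  exact: cvg_within.
rewrite /from_subspace; apply: (norm_le_cvg0 dist0).
by apply: filterS (withinT _ _) => y' Sy'; exact: f_lip.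
Qed.

Section ComplexNormed.
Context {R : realType} {V : normedModType R[i]}.

Lemma realC_lt_nat (e : R[i]) : e \is Num.real -> exists n : nat, e < n%:R.
Proof.
move=> /RRe_real <-; exists (Num.truncn (complex.Re e)).+1.
by rewrite -(rmorph_nat (real_complex R)) ltcR truncnS_gt.
Qed.

Lemma closure_image_cvg (T : Type) (S : set T) (f : T -> V) (x : V) :
  closure (f @` S) x ->
  exists u : nat -> T, (forall n, S (u n)) /\ (f \o u) @ \oo --> x.
Proof.
move=> clx.
have near_x n : exists t, S t /\ `|x - f t| < n.+1%:R^-1.
  have n_pos : 0 < (n.+1%:R^-1 : R[i]) by rewrite invr_gt0 ltr0Sn.
  have [_ [[t St <-] xt]] := clx _ (nbhsx_ballx x _ n_pos).
  by exists t; rewrite -ball_normE in xt.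
have [u hu] := choice near_x; exists u; split=> [n|]; first exact: (hu n).1.
apply/cvgrPdist_lt => e e0.
have [m me] : exists m : nat, e^-1 < m%:R.
  by apply/realC_lt_nat/gtr0_real; rewrite invr_gt0.
exists m => // n /= mn; apply: lt_trans (hu n).2 _.
rewrite -[e]invrK ltf_pV2 ?posrE ?invr_gt0 ?ltr0Sn //.
by apply: lt_le_trans me _; rewrite ler_nat leqW.
Qed.

End ComplexNormed.

Section CQstarCompletion.
Context {R : realType} {A0 : lalgType R[i]} {st : A0 -> A0} {n0 : A0 -> R}.
Context {A : completeNormedModType R[i]} {j : A0 -> A} {stA : A -> A}.
Hypothesis HC : is_unital_Cstar_algebra st n0.
Hypothesis HQ : is_CQstar_completion st n0 j stA.

Local Notation A1 := (tau_ind_completion n0 j).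
Local Notation mul := (A1mul n0 j).

Lemma j0 : j 0 = 0.
Proof. by rewrite -(scale0r (0 : A0)) (cq_j_scale HQ) scale0r. Qed.

Lemma jB a b : j (a - b) = j a - j b.
Proof. by rewrite (cq_j_add HQ) -scaleN1r (cq_j_scale HQ) scaleN1r. Qed.

Lemma n0_st_le a : n0 (st a) <= n0 a.
Proof.
have n0_ge0 := cs_n0_ge0 HC.
have : n0 (st a) ^+ 2 <= n0 a * n0 (st a).
  by rewrite -(cs_n0_Cstar HC) (cs_st_invol HC); exact: (cs_n0_mul HC).
have [-> _|st_neq0] := eqVneq (n0 (st a)) 0; first exact: n0_ge0.
by rewrite expr2 ler_pM2r // lt_def st_neq0 n0_ge0.
Qed.

Lemma n0_le_natC a (N : nat) : n0 a <= N%:R -> (n0 a)%:C <= N%:R.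
Proof. by rewrite -(rmorph_nat (real_complex R)) lecR. Qed.

(* Conjugating by the involution moves [a] to the right, where [cq_n_mul] applies. *)
Lemma norm_j_mull a b : `|j (a * b)| <= (n0 a)%:C * `|j b|.
Proof.
rewrite -(cq_n_st HQ) (cs_st_mul HC); apply: le_trans (cq_n_mul HQ _ _) _.
by rewrite (cq_n_st HQ) mulrC ler_wpM2r // lecR n0_st_le.
Qed.

Lemma norm_j_mulB_le (N : nat) a b a' b' : n0 b <= N%:R -> n0 a' <= N%:R ->
  `|j (a * b) - j (a' * b')| <= N%:R * (`|j a - j a'| + `|j b - j b'|).
Proof.
move=> b_le a'_le; rewrite -jB mulrDr.
have -> : a * b - a' * b' = (a - a') * b + a' * (b - b').
  by rewrite mulrBl mulrBr addrA subrK.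
rewrite (cq_j_add HQ); apply: le_trans (ler_normD _ _) _; apply: lerD.
  apply: le_trans (cq_n_mul HQ _ _) _.
  by rewrite jB mulrC ler_wpM2r // n0_le_natC.
apply: le_trans (norm_j_mull _ _) _.
by rewrite jB ler_wpM2r // n0_le_natC.
Qed.

Lemma st_scalerAr (c : R[i]) (a b : A0) : a * (c *: b) = c *: (a * b).
Proof.
rewrite -[LHS](cs_st_invol HC) (cs_st_mul HC) (cs_st_scale HC) -scalerAl.
by rewrite (cs_st_scale HC) (cs_st_mul HC) !(cs_st_invol HC) conjCK.
Qed.

Definition n0_bounded (u : nat -> A0) := exists N, boundedN n0 N u.

Lemma boundedN_le {N M u} : (N <= M)%N -> boundedN n0 N u -> boundedN n0 M u.
Proof. by move=> NM uN k; apply: le_trans (uN k) _; rewrite ler_nat. Qed.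

Lemma n0_bounded2 {u v} : n0_bounded u -> n0_bounded v ->
  exists N, boundedN n0 N u /\ boundedN n0 N v.
Proof.
move=> [N uN] [M vM]; exists (maxn N M); split.
  by apply: boundedN_le uN; rewrite leq_maxl.
by apply: boundedN_le vM; rewrite leq_maxr.
Qed.

Lemma n0_bounded_cst a : n0_bounded (fun=> a).
Proof. by exists (Num.truncn (n0 a)).+1 => k; exact/ltW/truncnS_gt. Qed.

Lemma n0_bounded_add {u v} : n0_bounded u -> n0_bounded v ->
  n0_bounded (fun k => u k + v k).
Proof.
move=> [N uN] [M vM]; exists (N + M)%N => k; rewrite /A0N /= natrD.
by apply: le_trans (cs_n0_add HC _ _) _; apply: lerD; [exact: uN|exact: vM].
Qed.

Lemma n0_bounded_mul {u v} : n0_bounded u -> n0_bounded v ->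
  n0_bounded (fun k => u k * v k).
Proof.
move=> [N uN] [M vM]; exists (N * M)%N => k; rewrite /A0N /= natrM.
apply: le_trans (cs_n0_mul HC _ _) _.
by apply: ler_pM; rewrite ?(cs_n0_ge0 HC) //; [exact: uN|exact: vM].
Qed.

Lemma n0_bounded_scale (c : R[i]) {u} : n0_bounded u -> n0_bounded (fun k => c *: u k).
Proof.
move=> [N uN]; have /realC_lt_nat [K cK] := normr_real c.
exists (K * N)%N => k; rewrite /A0N /= natrM -lecR (cs_n0_scale HC).
rewrite rmorphM /= (rmorph_nat (real_complex R)).
apply: ler_pM; rewrite ?normr_ge0 ?lecR ?(cs_n0_ge0 HC) ?(ltW cK) //.
exact: uN.
Qed.

Lemma n0_bounded_st {u} : n0_bounded u -> n0_bounded (fun k => st (u k)).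
Proof. by move=> [N uN]; exists N => k; apply: le_trans (n0_st_le _) (uN k). Qed.

Lemma A0N_cover : setT = \bigcup_(N in [set: nat]) A0N n0 N.
Proof.
apply/seteqP; split=> a // _.
by have [N aN] := n0_bounded_cst a; exists N => //; exact: aN 0%N.
Qed.

(* [u] converges to [X] for the inductive limit topology, i.e. [u] lies in
   some A0(N) and converges to [X] for ||.||. *)
Definition ind_cvg (u : nat -> A0) (X : A) := n0_bounded u /\ (j \o u) @ \oo --> X.

Lemma A1P X : X \in A1 <-> exists u, ind_cvg u X.
Proof.
rewrite in_setE; split=> [[N [u [uN [_ uX]]]]|[u [[N uN] uX]]].
  by exists u; split => //; exists N.
exists N, u; split => //; split => //.
by apply: cvg_cauchy; apply/cvg_ex; exists X.
Qed.

Lemma ind_cvg_mem_A1 {u X} : ind_cvg u X -> X \in A1.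
Proof. by move=> uX; apply/A1P; exists u. Qed.

Lemma ind_cvg_unique {u u' X X'} : ind_cvg u X -> ind_cvg u' X' -> u =1 u' -> X = X'.
Proof.
move=> [_ uX] [_ uX'] /funext uu'; rewrite uu' in uX.
exact: norm_cvg_unique uX uX'.
Qed.

Lemma ind_cvg_cst a : ind_cvg (fun=> a) (j a).
Proof. by split; [exact: n0_bounded_cst|exact: cvg_cst]. Qed.

Lemma ind_cvg_add {u v X Y} : ind_cvg u X -> ind_cvg v Y ->
  ind_cvg (fun k => u k + v k) (X + Y).
Proof.
move=> [bu uX] [bv vY]; split; first exact: n0_bounded_add.
have -> : j \o (fun k => u k + v k) = (j \o u) + (j \o v).
  by apply: funext => k; exact: (cq_j_add HQ).
exact: cvgD.
Qed.

Lemma ind_cvg_scale (c : R[i]) {u X} : ind_cvg u X ->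
  ind_cvg (fun k => c *: u k) (c *: X).
Proof.
move=> [bu uX]; split; first exact: n0_bounded_scale.
have -> : j \o (fun k => c *: u k) = c \*: (j \o u).
  by apply: funext => k; exact: (cq_j_scale HQ).
exact: cvgZl_tmp.
Qed.

Lemma ind_cvg_st {u X} : ind_cvg u X -> ind_cvg (fun k => st (u k)) (stA X).
Proof.
move=> [bu uX]; split; first exact: n0_bounded_st.
have -> : j \o (fun k => st (u k)) = stA \o (j \o u).
  by apply: funext => k; rewrite /= (cq_stA_ext HQ).
exact: (continuous_cvg _ (@cq_stA_cont _ _ _ _ _ _ _ HQ X) uX).
Qed.

Lemma image_j_sub_A1 : j @` setT `<=` A1.
Proof.
by move=> _ [a _ <-]; rewrite -in_setE; exact: ind_cvg_mem_A1 (ind_cvg_cst a).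
Qed.

Lemma A1_bigcup_closure : A1 = \bigcup_(N in [set: nat]) closure (j @` A0N n0 N).
Proof.
apply/seteqP; split=> X.
  rewrite -in_setE => /A1P [u [[N uN] uX]]; exists N => //.
  apply: (closed_cvg _ (@closed_closure _ (j @` A0N n0 N)) _ X uX).
  by apply: nearW => k; apply: subset_closure; exists (u k).
move=> [N _ /closure_image_cvg [u [uN uX]]]; rewrite -in_setE.
by apply: (ind_cvg_mem_A1 (u := u)); split => //; exists N.
Qed.

Lemma j_mul_cvg {N u v} {X Y : A} : boundedN n0 N u -> boundedN n0 N v ->
  (j \o u) @ \oo --> X -> (j \o v) @ \oo --> Y ->
  [cvg (fun k => j (u k * v k)) @ \oo in A].
Proof.
move=> uN vN uX vY; apply/cauchy_cvgP.
apply: (cauchy_le_sum (cvg_sum_dist0 N%:R uX (cvg_cst _) vY (cvg_cst _))) => p q.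
apply: le_trans (norm_j_mulB_le _ _ _ _ _ (vN p) (uN q)) _.
rewrite -mulrDr ler_wpM2l //= addrACA.
by apply: lerD; rewrite [Z in _ <= _ + Z]distrC; exact: ler_distD.
Qed.

Lemma is_product_unique (X Y : A) : is_subset1 [set Z | is_product n0 j X Y Z].
Proof.
move=> Z Z' [N [u [v [uN [vN [uX [vY uvZ]]]]]]].
move=> [N' [u' [v' [uN' [vN' [uX' [vY' uvZ']]]]]]].
apply/eqP; rewrite -subr_eq0; apply/eqP; apply: (norm_cvg_unique (cvgB uvZ uvZ')).
apply: (norm_le_cvg0 (cvg_sum_dist0 (maxn N N')%:R uX uX' vY vY')).
apply: nearW => k; apply: norm_j_mulB_le.
  exact: (boundedN_le (leq_maxl N N') vN k).
exact: (boundedN_le (leq_maxr N N') uN' k).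
Qed.

Lemma A1mul_cvg {N u v} {X Y : A} : boundedN n0 N u -> boundedN n0 N v ->
  (j \o u) @ \oo --> X -> (j \o v) @ \oo --> Y ->
  (fun k => j (u k * v k)) @ \oo --> mul X Y.
Proof.
move=> uN vN uX vY; have /cvg_ex [Z uvZ] := j_mul_cvg uN vN uX vY.
have uvP : is_product n0 j X Y Z by exists N, u, v.
by rewrite /A1mul (xget_subset1 _ uvP (is_product_unique X Y)).
Qed.

Lemma ind_cvg_mul {u v X Y} : ind_cvg u X -> ind_cvg v Y ->
  ind_cvg (fun k => u k * v k) (mul X Y).
Proof.
move=> [bu uX] [bv vY]; have [N [uN vN]] := n0_bounded2 bu bv.
by split; [exact: n0_bounded_mul|exact: A1mul_cvg uN vN uX vY].
Qed.

Lemma product_limit_in_A1 N u v (X Y : A) :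
  boundedN n0 N u -> boundedN n0 N v ->
  (j \o u) @ \oo --> X -> (j \o v) @ \oo --> Y ->
  exists Z : A, Z \in A1 /\ (fun k => j (u k * v k)) @ \oo --> Z.
Proof.
move=> uN vN uX vY; exists (mul X Y); split; last exact: A1mul_cvg uN vN uX vY.
have bu : n0_bounded u by exists N.
have bv : n0_bounded v by exists N.
exact: ind_cvg_mem_A1 (ind_cvg_mul (conj bu uX) (conj bv vY)).
Qed.

Lemma norm_A1mulBr_le N u X Y Y' : boundedN n0 N u -> (j \o u) @ \oo --> X ->
  Y \in A1 -> Y' \in A1 -> `|mul X Y' - mul X Y| <= N%:R * `|Y' - Y|.
Proof.
move=> uN uX /A1P [v vY] /A1P [v' vY'].
have uX' : ind_cvg u X by split => //; exists N.
apply: (ler_norm_cvg (cvgB (ind_cvg_mul uX' vY').2 (ind_cvg_mul uX' vY).2)).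
  by apply: cvgMl_tmp; apply: cvg_norm; exact: cvgB vY'.2 vY.2.
move=> k; rewrite !fctE /= -jB -mulrBr -jB; apply: le_trans (norm_j_mull _ _) _.
by apply: ler_wpM2r => //; exact: n0_le_natC (uN k).
Qed.

Lemma norm_A1mulBl_le N u X Y Y' : boundedN n0 N u -> (j \o u) @ \oo --> X ->
  Y \in A1 -> Y' \in A1 -> `|mul Y' X - mul Y X| <= N%:R * `|Y' - Y|.
Proof.
move=> uN uX /A1P [v vY] /A1P [v' vY'].
have uX' : ind_cvg u X by split => //; exists N.
apply: (ler_norm_cvg (cvgB (ind_cvg_mul vY' uX').2 (ind_cvg_mul vY uX').2)).
  by apply: cvgMl_tmp; apply: cvg_norm; exact: cvgB vY'.2 vY.2.
move=> k; rewrite !fctE /= -jB -mulrBl -jB; apply: le_trans (cq_n_mul HQ _ _) _.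
by rewrite mulrC; apply: ler_wpM2r => //; exact: n0_le_natC (uN k).
Qed.

Lemma A1mul_continuous X : X \in A1 ->
  {within A1, continuous (mul X)} /\ {within A1, continuous (fun Y => mul Y X)}.
Proof.
move=> /A1P [u [[N uN] uX]].
split; apply: (lipschitz_within_continuous _ _ N%:R) => Y Y' /mem_set hY /mem_set hY'.
  exact: norm_A1mulBr_le uN uX hY hY'.
exact: norm_A1mulBl_le uN uX hY hY'.
Qed.

Lemma A1mul_j a b : mul (j a) (j b) = j (a * b).
Proof.
exact: ind_cvg_unique (ind_cvg_mul (ind_cvg_cst a) (ind_cvg_cst b)) (ind_cvg_cst _) _.
Qed.

Lemma mem_A1_0 : 0 \in A1.
Proof. by rewrite -j0; exact: ind_cvg_mem_A1 (ind_cvg_cst 0). Qed.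

Lemma mem_A1D X Y : X \in A1 -> Y \in A1 -> X + Y \in A1.
Proof. by move=> /A1P [u uX] /A1P [v vY]; exact: ind_cvg_mem_A1 (ind_cvg_add uX vY). Qed.

Lemma mem_A1Z (c : R[i]) X : X \in A1 -> c *: X \in A1.
Proof. by move=> /A1P [u uX]; exact: ind_cvg_mem_A1 (ind_cvg_scale c uX). Qed.

Lemma mem_A1M X Y : X \in A1 -> Y \in A1 -> mul X Y \in A1.
Proof. by move=> /A1P [u uX] /A1P [v vY]; exact: ind_cvg_mem_A1 (ind_cvg_mul uX vY). Qed.

Lemma mem_A1_stA X : X \in A1 -> stA X \in A1.
Proof. by move=> /A1P [u uX]; exact: ind_cvg_mem_A1 (ind_cvg_st uX). Qed.

Lemma A1mulA X Y Z : X \in A1 -> Y \in A1 -> Z \in A1 ->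
  mul (mul X Y) Z = mul X (mul Y Z).
Proof.
move=> /A1P [u uX] /A1P [v vY] /A1P [w wZ].
apply: (ind_cvg_unique (ind_cvg_mul (ind_cvg_mul uX vY) wZ)
                       (ind_cvg_mul uX (ind_cvg_mul vY wZ))) => k.
by rewrite mulrA.
Qed.

Lemma A1mulDr X Y Z : X \in A1 -> Y \in A1 -> Z \in A1 ->
  mul X (Y + Z) = mul X Y + mul X Z.
Proof.
move=> /A1P [u uX] /A1P [v vY] /A1P [w wZ].
apply: (ind_cvg_unique (ind_cvg_mul uX (ind_cvg_add vY wZ))
                       (ind_cvg_add (ind_cvg_mul uX vY) (ind_cvg_mul uX wZ))) => k.
by rewrite mulrDr.
Qed.

Lemma A1mulDl X Y Z : X \in A1 -> Y \in A1 -> Z \in A1 ->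
  mul (X + Y) Z = mul X Z + mul Y Z.
Proof.
move=> /A1P [u uX] /A1P [v vY] /A1P [w wZ].
apply: (ind_cvg_unique (ind_cvg_mul (ind_cvg_add uX vY) wZ)
                       (ind_cvg_add (ind_cvg_mul uX wZ) (ind_cvg_mul vY wZ))) => k.
by rewrite mulrDl.
Qed.

Lemma A1_scalerAl (c : R[i]) X Y : X \in A1 -> Y \in A1 ->
  mul (c *: X) Y = c *: mul X Y.
Proof.
move=> /A1P [u uX] /A1P [v vY].
apply: (ind_cvg_unique (ind_cvg_mul (ind_cvg_scale c uX) vY)
                       (ind_cvg_scale c (ind_cvg_mul uX vY))) => k.
by rewrite scalerAl.
Qed.

Lemma A1_scalerAr (c : R[i]) X Y : X \in A1 -> Y \in A1 ->
  mul X (c *: Y) = c *: mul X Y.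
Proof.
move=> /A1P [u uX] /A1P [v vY].
apply: (ind_cvg_unique (ind_cvg_mul uX (ind_cvg_scale c vY))
                       (ind_cvg_scale c (ind_cvg_mul uX vY))) => k.
by rewrite st_scalerAr.
Qed.

Lemma stAK X : X \in A1 -> stA (stA X) = X.
Proof.
move=> /A1P [u uX].
by apply: (ind_cvg_unique (ind_cvg_st (ind_cvg_st uX)) uX) => k; rewrite (cs_st_invol HC).
Qed.

Lemma stAD X Y : X \in A1 -> Y \in A1 -> stA (X + Y) = stA X + stA Y.
Proof.
move=> /A1P [u uX] /A1P [v vY].
apply: (ind_cvg_unique (ind_cvg_st (ind_cvg_add uX vY))
                       (ind_cvg_add (ind_cvg_st uX) (ind_cvg_st vY))) => k.
by rewrite (cs_st_add HC).
Qed.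

Lemma stAZ (c : R[i]) X : X \in A1 -> stA (c *: X) = c^* *: stA X.
Proof.
move=> /A1P [u uX].
apply: (ind_cvg_unique (ind_cvg_st (ind_cvg_scale c uX))
                       (ind_cvg_scale c^* (ind_cvg_st uX))) => k.
by rewrite (cs_st_scale HC).
Qed.

Lemma stAM X Y : X \in A1 -> Y \in A1 -> stA (mul X Y) = mul (stA Y) (stA X).
Proof.
move=> /A1P [u uX] /A1P [v vY].
apply: (ind_cvg_unique (ind_cvg_st (ind_cvg_mul uX vY))
                       (ind_cvg_mul (ind_cvg_st vY) (ind_cvg_st uX))) => k.
by rewrite (cs_st_mul HC).
Qed.

Lemma norm_stA X : X \in A1 -> `|stA X| = `|X|.
Proof.
move=> /A1P [u uX]; apply: (norm_cvg_unique (cvg_norm (ind_cvg_st uX).2)).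
rewrite /=; under eq_fun do rewrite /= (cq_n_st HQ).
exact: cvg_norm uX.2.
Qed.

End CQstarCompletion.

Theorem proposition6p1 (R : realType) (A0 : lalgType R[i]) (st : A0 -> A0)
  (n0 : A0 -> R) (A : completeNormedModType R[i]) (j : A0 -> A)
  (stA : A -> A) :
  is_unital_Cstar_algebra st n0 ->
  is_CQstar_completion st n0 j stA ->
  let A1 := tau_ind_completion n0 j in
  let mul := A1mul n0 j in
  (* A0 = \bigcup_N A0(N) *)
  (setT = \bigcup_(N in [set: nat]) A0N n0 N) /\
  (* A0 \subset A1 \subset A *)
  (j @` setT `<=` A1) /\
  (* A1 = \bigcup_N closure of A0(N) in A *)
  (A1 = \bigcup_(N in [set: nat]) closure (j @` A0N n0 N)) /\
  (* existence of the product limit, lying in A1 *)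
  (forall (X Y : A) (N : nat) (u v : nat -> A0),
      X \in A1 -> Y \in A1 -> boundedN n0 N u -> boundedN n0 N v ->
      (j \o u) @ \oo --> X -> (j \o v) @ \oo --> Y ->
      exists Z : A, Z \in A1 /\ (fun k => j (u k * v k)) @ \oo --> Z) /\
  (* independence of the chosen sequences *)
  (forall X Y Z Z' : A, is_product n0 j X Y Z -> is_product n0 j X Y Z' ->
      Z = Z') /\
  (* the multiplication extends that of A0 *)
  (forall a b : A0, mul (j a) (j b) = j (a * b)) /\
  (* separate ||.||-continuity *)
  (forall X : A, X \in A1 ->
      {within A1, continuous (mul X)} /\
      {within A1, continuous (fun Y => mul Y X)}) /\
  (* A1 is a *-algebra (subspace of A closed under product and involution) *)
  (0 \in A1) /\
  (forall X Y : A, X \in A1 -> Y \in A1 -> X + Y \in A1) /\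
  (forall (c : R[i]) (X : A), X \in A1 -> c *: X \in A1) /\
  (forall X Y : A, X \in A1 -> Y \in A1 -> mul X Y \in A1) /\
  (forall X : A, X \in A1 -> stA X \in A1) /\
  (forall X Y Z : A, X \in A1 -> Y \in A1 -> Z \in A1 ->
      mul (mul X Y) Z = mul X (mul Y Z)) /\
  (forall X Y Z : A, X \in A1 -> Y \in A1 -> Z \in A1 ->
      mul X (Y + Z) = mul X Y + mul X Z /\ mul (X + Y) Z = mul X Z + mul Y Z) /\
  (forall (c : R[i]) (X Y : A), X \in A1 -> Y \in A1 ->
      mul (c *: X) Y = c *: mul X Y /\ mul X (c *: Y) = c *: mul X Y) /\
  (forall X : A, X \in A1 -> stA (stA X) = X) /\
  (forall X Y : A, X \in A1 -> Y \in A1 -> stA (X + Y) = stA X + stA Y) /\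
  (forall (c : R[i]) (X : A), X \in A1 -> stA (c *: X) = c^* *: stA X) /\
  (forall X Y : A, X \in A1 -> Y \in A1 -> stA (mul X Y) = mul (stA Y) (stA X)) /\
  (* isometric involution *)
  (forall X : A, X \in A1 -> `|stA X| = `|X|).
Proof.
move=> HC HQ A1 mul.
split; first exact: A0N_cover.
split; first exact: image_j_sub_A1.
split; first exact: A1_bigcup_closure.
split; first by move=> X Y N u v _ _; exact: (product_limit_in_A1 HC HQ).
split; first exact: (is_product_unique HC HQ).
split; first exact: (A1mul_j HC HQ).
split; first exact: (A1mul_continuous HC HQ).
split; first exact: (mem_A1_0 HQ).
split; first exact: (mem_A1D HC HQ).
split; first exact: (mem_A1Z HC HQ).
split; first exact: (mem_A1M HC HQ).
split; first exact: (mem_A1_stA HC HQ).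
split; first exact: (A1mulA HC HQ).
split.
  by move=> X Y Z hX hY hZ; split; [exact: (A1mulDr HC HQ)|exact: (A1mulDl HC HQ)].
split.
  by move=> c X Y hX hY; split; [exact: (A1_scalerAl HC HQ)|exact: (A1_scalerAr HC HQ)].
split; first exact: (stAK HC HQ).
split; first exact: (stAD HC HQ).
split; first exact: (stAZ HC HQ).
split; first exact: (stAM HC HQ).
exact: (norm_stA HC HQ).
Qed.
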